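(* Let $(b,c)$ be a connected canonically compactifiable weighted graph over $X$. If $f\in\mathcal A$ satisfies $\mathcal L f=0$ on $X$, then $\|f\|_\infty=\|\hat f|_{\partial X}\|_\infty$.
   Context: Let $X$ be a countably infinite set. A weighted graph $(b,c)$ over $X$ consists of a symmetric $b:X\times X\to[0,\infty)$ with $b(x,x)=0$ and $\sum_{y}b(x,y)<\infty$ for all $x$, and $c:X\to[0,\infty)$; connected means any two distinct vertices are joined by a finite path of pairwise distinct vertices with consecutive ones satisfying $b>0$. The formal Laplacian acts on bounded $f$ by $\mathcal Lf(x)=\sum_y b(x,y)(f(x)-f(y))+c(x)f(x)$. Let $\widetilde Q(f)=\frac12\sum_{x,y}b(x,y)|f(x)-f(y)|^2+\sum_x c(x)|f(x)|^2$ and $\widetilde D=\{f:\widetilde Q(f)<\infty\}$; the graph is canonically compactifiable if $\widetilde D\subseteq\ell^\infty(X)$. Then $\mathcal A$ is the sup-norm closure of $\widetilde D$ in $\ell^\infty(X)$, $\mathcal A^+$ the smallest $C^*$-subalgebra of $\ell^\infty(X)$ containing $\mathcal A$ and $1$, $K$ the set of characters (nonzero multiplicative linear functionals) of $\mathcal A^+$ with the weak-$*$ topology, $\hat g(\gamma)=\gamma(g)$ for $g\in\mathcal A^+$, $\gamma\in K$. Via $x\mapsto\delta_x$ ($\delta_x(f)=f(x)$) we view $X\subseteq K$ and set $\partial X=K\setminus X$. *)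

From Stdlib Require Import Reals.
Open Scope R_scope.

Definition Cx : Type := (R * R)%type.
Definition Cre (z : Cx) : R := fst z.
Definition Cim (z : Cx) : R := snd z.
Definition Cof (r : R) : Cx := (r, 0).
Definition C0 : Cx := (0, 0).
Definition C1 : Cx := (1, 0).
Definition Cadd (z w : Cx) : Cx := (fst z + fst w, snd z + snd w).
Definition Csub (z w : Cx) : Cx := (fst z - fst w, snd z - snd w).
Definition Cmul (z w : Cx) : Cx :=
  (fst z * fst w - snd z * snd w, fst z * snd w + snd z * fst w).
Definition Cconj (z : Cx) : Cx := (fst z, - snd z).
Definition Cmod (z : Cx) : R := sqrt (fst z ^ 2 + snd z ^ 2).

Section Graphs.
Context {X : Type}.
Variable e : nat -> X.   (* a fixed bijection nat -> X *)

Definition enumeration : Prop :=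
  (forall n m, e n = e m -> n = m) /\ (forall x, exists n, e n = x).

Definition weighted_graph (b : X -> X -> R) (c : X -> R) : Prop :=
  (forall x y, 0 <= b x y) /\ (forall x y, b x y = b y x) /\
  (forall x, b x x = 0) /\
  (forall x, exists l, infinite_sum (fun n => b x (e n)) l) /\
  (forall x, 0 <= c x).

Definition connected (b : X -> X -> R) : Prop :=
  forall x y, x <> y ->
    exists (n : nat) (p : nat -> X),
      p 0%nat = x /\ p n = y /\
      (forall i j, (i <= n)%nat -> (j <= n)%nat -> p i = p j -> i = j) /\
      (forall i, (i < n)%nat -> 0 < b (p i) (p (S i))).

(** Q~(f) < infinity (all terms are nonnegative, so finiteness means
    bounded partial sums, independent of the enumeration) *)
Definition Qfinite (b : X -> X -> R) (c : X -> R) (f : X -> Cx) : Prop :=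
  exists M, forall N,
    / 2 * sum_f_R0 (fun n => sum_f_R0 (fun m =>
             b (e n) (e m) * (Cmod (Csub (f (e n)) (f (e m)))) ^ 2) N) N
    + sum_f_R0 (fun n => c (e n) * (Cmod (f (e n))) ^ 2) N <= M.

Definition bounded (f : X -> Cx) : Prop := exists M, forall x, Cmod (f x) <= M.

Definition canonically_compactifiable (b : X -> X -> R) (c : X -> R) : Prop :=
  forall f, Qfinite b c f -> bounded f.

Definition sup_closed (S : (X -> Cx) -> Prop) : Prop :=
  forall f, bounded f ->
    (forall eps, 0 < eps -> exists g, S g /\ forall x, Cmod (Csub (f x) (g x)) <= eps) ->
    S f.

Definition in_A (b : X -> X -> R) (c : X -> R) (f : X -> Cx) : Prop :=
  bounded f /\
  forall eps, 0 < eps -> exists g, Qfinite b c g /\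
    forall x, Cmod (Csub (f x) (g x)) <= eps.

Definition Cstar_subalgebra (S : (X -> Cx) -> Prop) : Prop :=
  (forall f, S f -> bounded f) /\
  (forall f g, S f -> S g -> S (fun x => Cadd (f x) (g x))) /\
  (forall (a : Cx) f, S f -> S (fun x => Cmul a (f x))) /\
  (forall f g, S f -> S g -> S (fun x => Cmul (f x) (g x))) /\
  (forall f, S f -> S (fun x => Cconj (f x))) /\
  sup_closed S.

Definition in_Aplus (b : X -> X -> R) (c : X -> R) (f : X -> Cx) : Prop :=
  forall S, Cstar_subalgebra S -> (forall g, in_A b c g -> S g) ->
    S (fun _ => C1) -> S f.

(** characters of A^+ (only their values on A^+ are relevant) *)
Definition character (b : X -> X -> R) (c : X -> R) (gam : (X -> Cx) -> Cx) : Prop :=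
  (forall f g, in_Aplus b c f -> in_Aplus b c g ->
     gam (fun x => Cadd (f x) (g x)) = Cadd (gam f) (gam g)) /\
  (forall (a : Cx) f, in_Aplus b c f -> gam (fun x => Cmul a (f x)) = Cmul a (gam f)) /\
  (forall f g, in_Aplus b c f -> in_Aplus b c g ->
     gam (fun x => Cmul (f x) (g x)) = Cmul (gam f) (gam g)) /\
  (exists f, in_Aplus b c f /\ gam f <> C0).

Definition point_evaluation (b : X -> X -> R) (c : X -> R) (gam : (X -> Cx) -> Cx) : Prop :=
  exists x, forall f, in_Aplus b c f -> gam f = f x.

(** gam in the boundary dX = K \ X *)
Definition in_boundary (b : X -> X -> R) (c : X -> R) (gam : (X -> Cx) -> Cx) : Prop :=
  character b c gam /\ ~ point_evaluation b c gam.

(** L f (x) = 0, i.e. sum_y b(x,y)(f x - f y) + c x f x = 0 (series summed along e;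
    it converges absolutely for bounded f) *)
Definition harmonic_at (b : X -> X -> R) (c : X -> R) (f : X -> Cx) (x : X) : Prop :=
  infinite_sum (fun n => b x (e n) * (Cre (f x) - Cre (f (e n)))) (- (c x * Cre (f x))) /\
  infinite_sum (fun n => b x (e n) * (Cim (f x) - Cim (f (e n)))) (- (c x * Cim (f x))).

End Graphs.

(* Let f be in A with L f = 0 and let m = sup_x |f x|.

   Upper bound: every character gam of A^+ satisfies |gam g| <= sup |g|.  If
   |lam| > sup |g| then lam - g is invertible in A^+ (its inverse is
   conj (lam - g) / |lam - g|^2, and the reciprocal of a real function with
   values in [d, K], d > 0, is a uniform limit of Neumann sums), so a
   character cannot vanish on it; for lam = gam g it does.

   Lower bound: by the maximum principle, f is constant on the connected
   graph if |f| attains m, and otherwise |f (e n)| > m - eps for infinitely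
   many n.  An ultrafilter U through these vertices defines, by taking limits
   along U, a character of A^+.  It is not a point evaluation, since U
   contains no singleton while the indicator of every vertex has finite
   energy and hence lies in A.  Its value at f has modulus at least m - eps. *)

From Pilot Require Import Defs.
From Stdlib Require Import Reals Lra Lia Psatz Classical ClassicalEpsilon FunctionalExtensionality.
From mathcomp Require filter.
Open Scope R_scope.

Lemma Cmod_ge0 (z : Cx) : 0 <= Cmod z.
Proof. apply sqrt_pos. Qed.

Lemma Cmod_pow2 (z : Cx) : Cmod z ^ 2 = fst z ^ 2 + snd z ^ 2.
Proof. unfold Cmod; rewrite pow2_sqrt; nra. Qed.

Lemma Cmod_real (a : R) : Cmod (a, 0) = Rabs a.
Proof. unfold Cmod; simpl; rewrite <- sqrt_Rsqr_abs; f_equal; unfold Rsqr; ring. Qed.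

Lemma Cmod_C0 : Cmod C0 = 0.
Proof. unfold C0; rewrite Cmod_real; apply Rabs_R0. Qed.

Lemma Cmod_C1 : Cmod Defs.C1 = 1.
Proof. unfold Defs.C1; rewrite Cmod_real; apply Rabs_R1. Qed.

Lemma Cmod_fst (z : Cx) : Rabs (fst z) <= Cmod z.
Proof. unfold Cmod; rewrite <- sqrt_Rsqr_abs; apply sqrt_le_1_alt; unfold Rsqr; nra. Qed.

Lemma Cmod_snd (z : Cx) : Rabs (snd z) <= Cmod z.
Proof. unfold Cmod; rewrite <- sqrt_Rsqr_abs; apply sqrt_le_1_alt; unfold Rsqr; nra. Qed.

Lemma Cmod_le_coords (z : Cx) : Cmod z <= Rabs (fst z) + Rabs (snd z).
Proof.
  pose proof (Cmod_pow2 z); pose proof (Cmod_ge0 z).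
  pose proof (Rabs_pos (fst z)); pose proof (Rabs_pos (snd z)).
  pose proof (pow2_abs (fst z)); pose proof (pow2_abs (snd z)).
  nra.
Qed.

Lemma Cmod_inner_le (z w : Cx) : fst z * fst w + snd z * snd w <= Cmod z * Cmod w.
Proof.
  unfold Cmod; rewrite <- sqrt_mult by nra.
  apply Rle_trans with (Rabs (fst z * fst w + snd z * snd w)); [apply Rle_abs|].
  rewrite <- sqrt_Rsqr_abs; apply sqrt_le_1_alt; unfold Rsqr.
  pose proof (pow2_ge_0 (fst z * snd w - snd z * fst w)); nra.
Qed.

Lemma Cmod_triangle (z w : Cx) : Cmod (Cadd z w) <= Cmod z + Cmod w.
Proof.
  pose proof (Cmod_inner_le z w); pose proof (Cmod_pow2 (Cadd z w)).
  pose proof (Cmod_pow2 z); pose proof (Cmod_pow2 w).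
  pose proof (Cmod_ge0 (Cadd z w)); pose proof (Cmod_ge0 z); pose proof (Cmod_ge0 w).
  unfold Cadd in *; simpl in *; nra.
Qed.

Lemma Cmod_mul (z w : Cx) : Cmod (Cmul z w) = Cmod z * Cmod w.
Proof. unfold Cmod, Cmul; simpl; rewrite <- sqrt_mult by nra; f_equal; ring. Qed.

Lemma Cmod_conj (z : Cx) : Cmod (Cconj z) = Cmod z.
Proof. unfold Cmod, Cconj; simpl; f_equal; ring. Qed.

Lemma Cmod_sub_le (z w : Cx) : Cmod (Csub z w) <= Cmod z + Cmod w.
Proof.
  replace (Csub z w) with (Cadd z (Cmul (-1, 0) w))
    by (unfold Cadd, Cmul, Csub; simpl; f_equal; ring).
  rewrite <- (Rmult_1_l (Cmod w)), <- (Rabs_R1), <- Rabs_Ropp, <- Cmod_real, <- Cmod_mul.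
  apply Cmod_triangle.
Qed.

Lemma Cmod_le_sub (z w : Cx) : Cmod z <= Cmod (Csub z w) + Cmod w.
Proof.
  replace z with (Cadd (Csub z w) w) at 1
    by (destruct z, w; unfold Cadd, Csub; simpl; f_equal; ring).
  apply Cmod_triangle.
Qed.

Lemma Cmul_fix_C1 (u w : Cx) : Cmul u w = w -> w <> C0 -> u = Defs.C1.
Proof.
  destruct u as [u1 u2], w as [a b]; unfold Cmul, Defs.C1, C0; simpl; intros H Hw.
  injection H; intros H2 H1.
  assert (Hs : a * a + b * b <> 0).
  { intro Hz; apply Hw; f_equal; nra. }
  assert (E1 : (u1 - 1) * (a * a + b * b) = 0).
  { replace ((u1 - 1) * (a * a + b * b))
      with ((u1 * a - u2 * b - a) * a + (u1 * b + u2 * a - b) * b) by ring.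
    rewrite H1, H2; ring. }
  assert (E2 : u2 * (a * a + b * b) = 0).
  { replace (u2 * (a * a + b * b))
      with ((u1 * b + u2 * a - b) * a - (u1 * a - u2 * b - a) * b) by ring.
    rewrite H1, H2; ring. }
  apply Rmult_integral in E1 as [E1|E1]; [|contradiction].
  apply Rmult_integral in E2 as [E2|E2]; [|contradiction].
  f_equal; lra.
Qed.

Lemma term_le_series (t : nat -> R) (l : R) (k : nat) :
  infinite_sum t l -> (forall n, 0 <= t n) -> t k <= l.
Proof.
  intros Hs Ht. apply Rle_trans with (sum_f_R0 t k).
  - destruct k as [|k]; simpl; [lra|]. pose proof (cond_pos_sum t k Ht); lra.
  - apply sum_incr; auto.
Qed.

Lemma infinite_sum_lin (u v : nat -> R) (U V p q : R) :
  infinite_sum u U -> infinite_sum v V ->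
  infinite_sum (fun n => p * u n + q * v n) (p * U + q * V).
Proof.
  intros Hu Hv.
  change (Un_cv (sum_f_R0 (fun n => p * u n + q * v n)) (p * U + q * V)).
  assert (Hconst : forall r, Un_cv (fun _ => r) r).
  { intros r eps Heps; exists 0%nat; intros; unfold Rdist; rewrite Rminus_diag, Rabs_R0; lra. }
  apply (Un_cv_ext (fun N => p * sum_f_R0 u N + q * sum_f_R0 v N)).
  - intro N. rewrite sum_plus, !scal_sum. f_equal; apply sum_eq; intros; ring.
  - apply CV_plus; apply CV_mult; auto.
Qed.

Lemma Cx_eq_of_inner_nonpos (z w : Cx) :
  fst z * (fst z - fst w) + snd z * (snd z - snd w) <= 0 ->
  Cmod w <= Cmod z -> w = z.
Proof.
  intros Hin Hmod.
  assert (Hsq : fst w ^ 2 + snd w ^ 2 <= fst z ^ 2 + snd z ^ 2).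
  { rewrite <- !Cmod_pow2. pose proof (Cmod_ge0 w). nra. }
  assert (Hd : (fst z - fst w) ^ 2 + (snd z - snd w) ^ 2 <= 0) by nra.
  pose proof (pow2_ge_0 (fst z - fst w)); pose proof (pow2_ge_0 (snd z - snd w)).
  destruct z as [a a'], w as [p p']; simpl in *.
  f_equal; apply Rminus_diag_uniq_sym, Rsqr_0_uniq; unfold Rsqr; nra.
Qed.

Section MaximumPrinciple.
Context {X : Type} (e : nat -> X) (b : X -> X -> R) (c : X -> R) (f : X -> Cx).
Hypotheses (He : enumeration e) (Hgraph : weighted_graph e b c)
  (Hharm : forall x, harmonic_at e b c f x).

(* If |f| is maximal at x, then f y = f x for every neighbour y of x: pairing
   the equation L f (x) = 0 with f x gives a series of nonnegative terms
   b(x,y) Re <f x, f x - f y> with sum -c(x) |f x|^2 <= 0. *)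
Lemma max_modulus_neighbour (x y : X) :
  (forall z, Cmod (f z) <= Cmod (f x)) -> 0 < b x y -> f y = f x.
Proof.
  intros Hmax Hbxy.
  destruct He as [_ Hsurj]; destruct Hgraph as (Hb0 & _ & _ & _ & Hc0).
  destruct (Hsurj y) as [k <-].
  destruct (Hharm x) as [Hre Him]; unfold Cre, Cim in *.
  assert (Hinner : forall n,
    0 <= fst (f x) * (fst (f x) - fst (f (e n))) + snd (f x) * (snd (f x) - snd (f (e n))))
  by (intro n; pose proof (Cmod_inner_le (f x) (f (e n))); pose proof (Cmod_pow2 (f x));
      pose proof (Hmax (e n)); pose proof (Cmod_ge0 (f x)); pose proof (Cmod_ge0 (f (e n))); nra).
  pose proof (term_le_series _ _ k (infinite_sum_lin _ _ _ _ (fst (f x)) (snd (f x)) Hre Him))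
    as Hk; cbv beta in Hk.
  assert (Hk_nonpos : b x (e k) *
    (fst (f x) * (fst (f x) - fst (f (e k))) + snd (f x) * (snd (f x) - snd (f (e k)))) <= 0).
  { pose proof (Hc0 x). pose proof (pow2_ge_0 (fst (f x))). pose proof (pow2_ge_0 (snd (f x))).
    enough (Hnonneg : forall n, 0 <= fst (f x) * (b x (e n) * (fst (f x) - fst (f (e n))))
                            + snd (f x) * (b x (e n) * (snd (f x) - snd (f (e n)))))
      by (specialize (Hk Hnonneg); nra).
    intro n; pose proof (Hinner n); pose proof (Hb0 x (e n)); nra. }
  apply Cx_eq_of_inner_nonpos; [nra | apply Hmax].
Qed.

Lemma max_modulus_constant (x0 : X) : connected b ->
  (forall z, Cmod (f z) <= Cmod (f x0)) -> forall x, f x = f x0.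
Proof.
  intros Hconn Hmax x.
  destruct (classic (x = x0)) as [->|Hne]; [reflexivity|].
  destruct (Hconn x0 x (fun E => Hne (eq_sym E))) as (n & p & Hp0 & Hpn & _ & Hpb).
  assert (Hpath : forall i, (i <= n)%nat -> f (p i) = f x0).
  { induction i as [|i IH]; intros Hi; [now rewrite Hp0|].
    rewrite (max_modulus_neighbour (p i) (p (S i))).
    - apply IH; lia.
    - intro z; rewrite IH by lia; apply Hmax.
    - apply Hpb; lia. }
  rewrite <- Hpn; apply Hpath; lia.
Qed.

End MaximumPrinciple.

Lemma finite_max_below (a : nat -> R) (m : R) (N : nat) : (forall n, a n < m) ->
  exists m', m' < m /\ forall n, (n < N)%nat -> a n <= m'.
Proof.
  intros Hlt. induction N as [|N [m' [Hm' Hle]]].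
  - exists (m - 1); split; [lra | intros; lia].
  - exists (Rmax m' (a N)); split; [now apply Rmax_lub_lt|].
    intros n Hn. destruct (Nat.eq_dec n N) as [->|Hne]; [apply Rmax_r|].
    eapply Rle_trans; [apply Hle; lia | apply Rmax_l].
Qed.

Lemma lub_not_attained_frequently (a : nat -> R) (m : R) :
  is_lub (fun r => exists n, r = a n) m -> (forall n, a n < m) ->
  forall eps N, 0 < eps -> exists n, (N <= n)%nat /\ m - eps < a n.
Proof.
  intros [_ Hleast] Hlt eps N Heps. apply NNPP; intro Hnot.
  destruct (finite_max_below a m N Hlt) as (m' & Hm' & Hle).
  assert (Hbound : m <= Rmax m' (m - eps)).
  { apply Hleast; intros r [n ->]. destruct (Nat.lt_ge_cases n N) as [Hn|Hn].
    - eapply Rle_trans; [apply Hle; exact Hn | apply Rmax_l].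
    - eapply Rle_trans; [|apply Rmax_r].
      apply Rnot_lt_le; intro Hgt; apply Hnot; exists n; split; [lia | lra]. }
  pose proof (Rmax_lub_lt m' (m - eps) m Hm' ltac:(lra)); lra.
Qed.

Lemma harmonic_modulus_near_sup {X : Type} (e : nat -> X) (b : X -> X -> R) (c : X -> R)
  (f : X -> Cx) (m : R) :
  enumeration e -> weighted_graph e b c -> connected b -> (forall x, harmonic_at e b c f x) ->
  is_lub (fun r => exists x, r = Cmod (f x)) m ->
  forall eps N, 0 < eps -> exists n, (N <= n)%nat /\ m - eps < Cmod (f (e n)).
Proof.
  intros He Hgraph Hconn Hharm Hm eps N Heps.
  assert (Hle : forall x, Cmod (f x) <= m) by (intro x; apply Hm; eauto).
  destruct (classic (exists x0, Cmod (f x0) = m)) as [[x0 Hx0]|Hnone].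
  - exists N; split; [lia|].
    rewrite (max_modulus_constant e b c f He Hgraph Hharm x0 Hconn); [lra|].
    intro z; rewrite Hx0; apply Hle.
  - destruct He as [_ Hsurj]. apply lub_not_attained_frequently; auto.
    + split; [intros r [n ->]; apply Hle|].
      intros u Hu; apply Hm; intros r [x ->].
      destruct (Hsurj x) as [n <-]; apply Hu; eauto.
    + intro n; destruct (Rle_lt_or_eq_dec _ _ (Hle (e n))) as [|Heq]; [assumption|].
      exfalso; apply Hnone; eauto.
Qed.

Section Aplus.
Context {X : Type} (e : nat -> X) (b : X -> X -> R) (c : X -> R).

Lemma Aplus_of_A (g : X -> Cx) : in_A e b c g -> in_Aplus e b c g.
Proof. intros Hg S _ HA _; auto. Qed.

Lemma Aplus_one : in_Aplus e b c (fun _ => Defs.C1).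
Proof. intros S _ _ H1; exact H1. Qed.

Lemma Aplus_add (g h : X -> Cx) : in_Aplus e b c g -> in_Aplus e b c h ->
  in_Aplus e b c (fun x => Cadd (g x) (h x)).
Proof.
  intros Hg Hh S HS HA H1; pose proof HS as (_ & Hadd & _).
  apply Hadd; [apply Hg | apply Hh]; auto.
Qed.

Lemma Aplus_scal (a : Cx) (g : X -> Cx) : in_Aplus e b c g ->
  in_Aplus e b c (fun x => Cmul a (g x)).
Proof. intros Hg S HS HA H1; pose proof HS as (_ & _ & Hscal & _); apply Hscal, Hg; auto. Qed.

Lemma Aplus_mul (g h : X -> Cx) : in_Aplus e b c g -> in_Aplus e b c h ->
  in_Aplus e b c (fun x => Cmul (g x) (h x)).
Proof.
  intros Hg Hh S HS HA H1; pose proof HS as (_ & _ & _ & Hmul & _).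
  apply Hmul; [apply Hg | apply Hh]; auto.
Qed.

Lemma Aplus_conj (g : X -> Cx) : in_Aplus e b c g -> in_Aplus e b c (fun x => Cconj (g x)).
Proof.
  intros Hg S HS HA H1; pose proof HS as (_ & _ & _ & _ & Hconj & _).
  apply Hconj, Hg; auto.
Qed.

Lemma Aplus_ext (g h : X -> Cx) : (forall x, g x = h x) -> in_Aplus e b c g -> in_Aplus e b c h.
Proof. intros E; replace h with g; [auto | now apply functional_extensionality]. Qed.

Lemma Aplus_closed (g : X -> Cx) : Defs.bounded g ->
  (forall eps, 0 < eps -> exists h, in_Aplus e b c h /\ forall x, Cmod (Csub (g x) (h x)) <= eps) ->
  in_Aplus e b c g.
Proof.
  intros Hb Hap S HS HA H1. pose proof HS as (_ & _ & _ & _ & _ & Hclosed).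
  apply Hclosed; [exact Hb|]; intros eps Heps.
  destruct (Hap eps Heps) as (h & Hh & Hd); exists h; split; [apply Hh|]; auto.
Qed.

(* The bounded functions form a C*-subalgebra of l^infinity(X), so every
   element of A^+ is bounded. *)
Lemma bounded_Cstar_subalgebra : Cstar_subalgebra (@Defs.bounded X).
Proof.
  repeat split; auto.
  - intros g h [M1 H1] [M2 H2]; exists (M1 + M2); intro x.
    eapply Rle_trans; [apply Cmod_triangle|]. pose proof (H1 x); pose proof (H2 x); lra.
  - intros a g [M H]; exists (Cmod a * M); intro x; rewrite Cmod_mul.
    apply Rmult_le_compat_l; [apply Cmod_ge0 | apply H].
  - intros g h [M1 H1] [M2 H2]; exists (M1 * M2); intro x; rewrite Cmod_mul.
    apply Rmult_le_compat; auto using Cmod_ge0.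
  - intros g [M H]; exists M; intro x; rewrite Cmod_conj; apply H.
  - intros g Hg _; exact Hg.
Qed.

Lemma Aplus_bounded (g : X -> Cx) : in_Aplus e b c g -> Defs.bounded g.
Proof.
  intros Hg; apply Hg; [apply bounded_Cstar_subalgebra | intros h [Hh _]; exact Hh |].
  exists 1; intro; rewrite Cmod_C1; lra.
Qed.

Lemma Aplus_geometric_sum (q : X -> R) (N : nat) : in_Aplus e b c (fun x => (q x, 0)) ->
  in_Aplus e b c (fun x => (sum_f_R0 (fun n => q x ^ n) N, 0)).
Proof.
  intros Hq.
  assert (Hpow : forall n, in_Aplus e b c (fun x => (q x ^ n, 0))).
  { induction n as [|n IH].
    - exact Aplus_one.
    - apply (Aplus_ext (fun x => Cmul (q x, 0) (q x ^ n, 0))); [|now apply Aplus_mul].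
      intro x; unfold Cmul; simpl; f_equal; ring. }
  induction N as [|N IH]; [apply Hpow|].
  apply (Aplus_ext (fun x => Cadd (sum_f_R0 (fun n => q x ^ n) N, 0) (q x ^ S N, 0)));
    [|now apply Aplus_add].
  intro x; unfold Cadd; simpl; f_equal; ring.
Qed.

End Aplus.

Lemma geometric_sum_error (q rho : R) (N : nat) : 0 <= q <= rho -> rho < 1 ->
  Rabs (/ (1 - q) - sum_f_R0 (fun n => q ^ n) N) <= rho ^ (N + 1) / (1 - rho).
Proof.
  intros Hq Hrho.
  assert (Hsum : sum_f_R0 (fun n => q ^ n) N = (1 - q ^ (N + 1)) / (1 - q)).
  { apply (Rmult_eq_reg_r (q - 1)); [|lra]. rewrite GP_finite. field; lra. }
  rewrite Hsum.
  replace (/ (1 - q) - (1 - q ^ (N + 1)) / (1 - q)) with (q ^ (N + 1) / (1 - q)) by (field; lra).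
  assert (Hpow : 0 <= q ^ (N + 1) <= rho ^ (N + 1))
    by (split; [apply pow_le | apply pow_incr]; lra).
  rewrite Rabs_right
    by (apply Rle_ge; unfold Rdiv; apply Rmult_le_pos; [lra | left; apply Rinv_0_lt_compat; lra]).
  unfold Rdiv; apply Rmult_le_compat; try lra.
  - left; apply Rinv_0_lt_compat; lra.
  - apply Rinv_le_contravar; lra.
Qed.

Section AplusInverse.
Context {X : Type} (e : nat -> X) (b : X -> X -> R) (c : X -> R).

(* Neumann series: 1 / (1 - q) lies in A^+ whenever q does and 0 <= q <= rho < 1,
   being a uniform limit of geometric sums. *)
Lemma Aplus_neumann (q : X -> R) (rho : R) :
  in_Aplus e b c (fun x => (q x, 0)) -> rho < 1 -> (forall x, 0 <= q x <= rho) ->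
  in_Aplus e b c (fun x => (/ (1 - q x), 0)).
Proof.
  intros Hq Hrho Hqx. apply Aplus_closed.
  - exists (/ (1 - rho)); intro x; rewrite Cmod_real. destruct (Hqx x).
    rewrite Rabs_right by (apply Rle_ge, Rlt_le, Rinv_0_lt_compat; lra).
    apply Rinv_le_contravar; lra.
  - intros eps Heps.
    assert (Hrho0 : 0 <= rho) by (destruct (Hqx (e 0%nat)); lra).
    destruct (pow_lt_1_zero rho ltac:(rewrite Rabs_right; lra) (eps * (1 - rho)))
      as [N HN]; [nra|].
    exists (fun x => (sum_f_R0 (fun n => q x ^ n) N, 0)).
    split; [now apply Aplus_geometric_sum|].
    intro x; unfold Csub; simpl; rewrite Rminus_0_r, Cmod_real.
    eapply Rle_trans; [apply geometric_sum_error; auto|].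
    specialize (HN (N + 1)%nat ltac:(lia)); rewrite Rabs_right in HN by (apply Rle_ge, pow_le; lra).
    apply (Rmult_le_reg_r (1 - rho)); [lra|]. unfold Rdiv; rewrite Rmult_assoc, Rinv_l; lra.
Qed.

Lemma Aplus_inv_real (k : X -> R) (d K : R) :
  in_Aplus e b c (fun x => (k x, 0)) -> 0 < d <= K -> (forall x, d <= k x <= K) ->
  in_Aplus e b c (fun x => (/ k x, 0)).
Proof.
  intros Hk HdK Hkx.
  set (q := fun x => 1 - k x / K).
  assert (Hq : in_Aplus e b c (fun x => (q x, 0))).
  { apply (Aplus_ext e b c (fun x => Cadd Defs.C1 (Cmul (- / K, 0) (k x, 0)))).
    - intro x; unfold Cadd, Cmul, Defs.C1, q; simpl; f_equal; unfold Rdiv; ring.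
    - apply Aplus_add; [apply Aplus_one | now apply Aplus_scal]. }
  apply (Aplus_ext e b c (fun x => Cmul (/ K, 0) (/ (1 - q x), 0))).
  - intro x; unfold Cmul, q; simpl. destruct (Hkx x). f_equal; field; lra.
  - apply Aplus_scal, (Aplus_neumann q (1 - d / K)); auto.
    + assert (0 < d / K) by (apply Rdiv_lt_0_compat; lra); lra.
    + intro x; destruct (Hkx x); unfold q; split.
      * enough (k x / K <= 1) by lra. apply (Rmult_le_reg_r K); [lra|].
        unfold Rdiv; rewrite Rmult_assoc, Rinv_l; lra.
      * enough (d / K <= k x / K) by lra. unfold Rdiv; apply Rmult_le_compat_r; [|lra].
        left; apply Rinv_0_lt_compat; lra.
Qed.

(* An element of A^+ whose modulus is bounded away from 0 is invertible in
   A^+, with inverse conj g / |g|^2. *)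
Lemma Aplus_invertible (g : X -> Cx) (d K : R) :
  in_Aplus e b c g -> 0 < d <= K -> (forall x, d <= Cmod (g x) <= K) ->
  exists h, in_Aplus e b c h /\ forall x, Cmul (g x) (h x) = Defs.C1.
Proof.
  intros Hg HdK Hgx.
  set (k := fun x => fst (g x) ^ 2 + snd (g x) ^ 2).
  assert (Hk : in_Aplus e b c (fun x => (k x, 0))).
  { apply (Aplus_ext e b c (fun x => Cmul (g x) (Cconj (g x)))); [|now apply Aplus_mul, Aplus_conj].
    intro x; unfold k, Cmul, Cconj; simpl; f_equal; ring. }
  assert (Hkx : forall x, d ^ 2 <= k x <= K ^ 2).
  { intro x; unfold k; rewrite <- Cmod_pow2. destruct (Hgx x). split; apply pow_incr; lra. }
  exists (fun x => Cmul (Cconj (g x)) (/ k x, 0)). split.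
  - apply Aplus_mul; [now apply Aplus_conj|].
    apply (Aplus_inv_real k (d ^ 2) (K ^ 2)); auto.
    split; [apply pow_lt | apply pow_incr]; lra.
  - intro x. assert (Hpos : 0 < k x) by (destruct (Hkx x); pose proof (pow_lt d 2); lra).
    unfold k in *; unfold Cmul, Cconj, Defs.C1; simpl. f_equal; field; lra.
Qed.

End AplusInverse.

Section Characters.
Context {X : Type} (e : nat -> X) (b : X -> X -> R) (c : X -> R).
Variable gam : (X -> Cx) -> Cx.
Hypothesis Hchar : character e b c gam.

Lemma character_one : gam (fun _ => Defs.C1) = Defs.C1.
Proof.
  destruct Hchar as (_ & _ & Hmul & h & Hh & Hne).
  pose proof (Hmul (fun _ => Defs.C1) h (Aplus_one e b c) Hh) as E; cbv beta in E.
  replace (fun x => Cmul Defs.C1 (h x)) with h in E.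
  - exact (Cmul_fix_C1 _ _ (eq_sym E) Hne).
  - apply functional_extensionality; intro x.
    unfold Cmul, Defs.C1; destruct (h x); simpl; f_equal; ring.
Qed.

Lemma character_invertible_nonzero (g h : X -> Cx) :
  in_Aplus e b c g -> in_Aplus e b c h -> (forall x, Cmul (g x) (h x) = Defs.C1) ->
  gam g <> C0.
Proof.
  intros Hg Hh Hgh E. pose proof character_one as H1.
  destruct Hchar as (_ & _ & Hmul & _).
  pose proof (Hmul g h Hg Hh) as M.
  replace (fun x => Cmul (g x) (h x)) with (fun _ : X => Defs.C1) in M
    by (apply functional_extensionality; intro x; now rewrite Hgh).
  rewrite H1, E in M. unfold Cmul, Defs.C1, C0 in M; simpl in M.
  injection M; lra.
Qed.

(* |gam g| <= sup |g|: if |lam| > sup |g| then lam - g is invertible in A^+,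
   while gam (lam - g) = lam - gam g vanishes for lam = gam g. *)
Lemma character_bound (g : X -> Cx) (m : R) :
  in_Aplus e b c g -> (forall x, Cmod (g x) <= m) -> Cmod (gam g) <= m.
Proof.
  intros Hg Hm. apply Rnot_lt_le; intro Hlt.
  set (lam := gam g) in *.
  set (h := fun x => Cadd (Cmul lam Defs.C1) (Cmul (-1, 0) (g x))).
  assert (Hc1 : in_Aplus e b c (fun _ => Cmul lam Defs.C1)) by apply Aplus_scal, Aplus_one.
  assert (Hc2 : in_Aplus e b c (fun x => Cmul (-1, 0) (g x))) by now apply Aplus_scal.
  assert (Hh : in_Aplus e b c h) by exact (Aplus_add e b c _ _ Hc1 Hc2).
  assert (Hgam_h : gam h = C0).
  { pose proof character_one as H1. destruct Hchar as (Hadd & Hscal & _).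
    unfold h; rewrite (Hadd _ _ Hc1 Hc2), (Hscal lam _ (Aplus_one e b c)), (Hscal _ g Hg), H1.
    fold lam; unfold Cadd, Cmul, Defs.C1, C0; simpl; f_equal; ring. }
  assert (Hhx : forall x, Cmod lam - m <= Cmod (h x) <= Cmod lam + Rabs m).
  { intro x. replace (h x) with (Csub lam (g x))
      by (unfold h, Cadd, Cmul, Csub, Defs.C1; destruct lam, (g x); simpl; f_equal; ring).
    pose proof (Cmod_le_sub lam (g x)); pose proof (Cmod_sub_le lam (g x)).
    pose proof (Hm x); pose proof (Rle_abs m); lra. }
  destruct (Aplus_invertible e b c h (Cmod lam - m) (Cmod lam + Rabs m)) as (hinv & Hinv & Hhinv);
    auto.
  - pose proof (Rle_abs (- m)); rewrite Rabs_Ropp in *; lra.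
  - exact (character_invertible_nonzero h hinv Hh Hinv Hhinv Hgam_h).
Qed.

End Characters.

Lemma sum_single_index (a : R) (k N : nat) : 0 <= a ->
  sum_f_R0 (fun n => if Nat.eq_dec n k then a else 0) N <= a.
Proof.
  intros Ha. induction N as [|N IH]; cbn [sum_f_R0].
  - destruct (Nat.eq_dec 0 k); lra.
  - destruct (Nat.eq_dec (S N) k) as [Heq|Hne]; [subst k|lra].
    enough (sum_f_R0 (fun n => if Nat.eq_dec n (S N) then a else 0) N = 0) by lra.
    rewrite (sum_eq _ (fun _ => 0)), sum_cte; [ring|].
    intros i Hi; destruct (Nat.eq_dec i (S N)); [lia | reflexivity].
Qed.

Definition indicator {X : Type} (x0 : X) : X -> Cx :=
  fun x => if excluded_middle_informative (x = x0) then Defs.C1 else C0.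

Section Indicators.
Context {X : Type} (e : nat -> X) (b : X -> X -> R) (c : X -> R).
Hypotheses (He : enumeration e) (Hgraph : weighted_graph e b c).

(* The energy of the indicator of x0 is sum_y b(x0, y) + c(x0) < oo. *)
Lemma indicator_Qfinite (x0 : X) : Qfinite e b c (indicator x0).
Proof.
  destruct He as [Hinj Hsurj]; destruct Hgraph as (Hb0 & Hsym & _ & Hsum & Hc0).
  destruct (Hsurj x0) as [k Hk]; destruct (Hsum x0) as [l Hl].
  set (g := fun j => b x0 (e j)).
  assert (Hg0 : forall j, 0 <= g j) by (intro j; apply Hb0).
  assert (Hind : forall n, indicator x0 (e n) = if Nat.eq_dec n k then Defs.C1 else C0).
  { intro n; unfold indicator.
    destruct (excluded_middle_informative _) as [E|E], (Nat.eq_dec n k) as [E'|E']; auto.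
    - exfalso; apply E', Hinj; congruence.
    - exfalso; apply E; congruence. }
  (* only pairs with exactly one endpoint at x0 contribute *)
  assert (Hterm : forall n m,
    b (e n) (e m) * Cmod (Csub (indicator x0 (e n)) (indicator x0 (e m))) ^ 2
    <= (if Nat.eq_dec n k then g m else 0) + (if Nat.eq_dec m k then g n else 0)).
  { intros n m; rewrite !Hind, Cmod_pow2; unfold g.
    pose proof (Hb0 x0 (e m)); pose proof (Hb0 x0 (e n)); pose proof (Hsym (e n) x0).
    destruct (Nat.eq_dec n k) as [->|], (Nat.eq_dec m k) as [->|];
      unfold Csub, Defs.C1, C0; simpl; rewrite ?Hk in *; nra. }
  assert (Hrow : forall n N,
    sum_f_R0 (fun m => b (e n) (e m) * Cmod (Csub (indicator x0 (e n)) (indicator x0 (e m))) ^ 2) N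
    <= (if Nat.eq_dec n k then l else 0) + g n).
  { intros n N. eapply Rle_trans; [apply sum_Rle; intros m _; apply Hterm|].
    rewrite sum_plus; apply Rplus_le_compat.
    - destruct (Nat.eq_dec n k); [apply sum_incr; auto|].
      rewrite sum_cte; lra.
    - apply sum_single_index, Hg0. }
  exists (l + c x0); intro N.
  assert (Henergy : sum_f_R0 (fun n => sum_f_R0 (fun m =>
      b (e n) (e m) * Cmod (Csub (indicator x0 (e n)) (indicator x0 (e m))) ^ 2) N) N <= l + l).
  { eapply Rle_trans; [apply sum_Rle; intros n _; apply Hrow|].
    rewrite sum_plus; apply Rplus_le_compat; [apply sum_single_index | apply sum_incr]; auto.
    apply (Rle_trans _ (g 0%nat)); [apply Hg0 | apply (term_le_series g l 0); auto]. }
  assert (Hkill : sum_f_R0 (fun n => c (e n) * Cmod (indicator x0 (e n)) ^ 2) N <= c x0).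
  { rewrite (sum_eq _ (fun n => if Nat.eq_dec n k then c x0 else 0));
      [apply sum_single_index, Hc0|].
    intros n _; rewrite Hind, Cmod_pow2.
    destruct (Nat.eq_dec n k) as [->|]; unfold Defs.C1, C0; simpl; rewrite ?Hk; ring. }
  lra.
Qed.

Lemma indicator_in_A (x0 : X) : in_A e b c (indicator x0).
Proof.
  split.
  - exists 1; intro x; unfold indicator.
    destruct (excluded_middle_informative _); [rewrite Cmod_C1 | rewrite Cmod_C0]; lra.
  - intros eps Heps; exists (indicator x0); split; [apply indicator_Qfinite|].
    intro x; replace (Csub _ _) with C0 by (unfold Csub, C0; f_equal; ring).
    rewrite Cmod_C0; lra.
Qed.

End Indicators.

Record is_ultrafilter {T : Type} (U : (T -> Prop) -> Prop) : Prop := {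
  uf_true : U (fun _ => True);
  uf_and : forall A B, U A -> U B -> U (fun x => A x /\ B x);
  uf_mono : forall A B : T -> Prop, (forall x, A x -> B x) -> U A -> U B;
  uf_nonempty : forall A, U A -> exists x, A x;
  uf_total : forall A, U A \/ U (fun x => ~ A x) }.

Lemma ultrafilter_extension {T : Type} (F : (T -> Prop) -> Prop) :
  F (fun _ => True) ->
  (forall A B, F A -> F B -> F (fun x => A x /\ B x)) ->
  (forall A B : T -> Prop, (forall x, A x -> B x) -> F A -> F B) ->
  (forall A, F A -> exists x, A x) ->
  exists U, is_ultrafilter U /\ forall A, F A -> U A.
Proof.
  intros HT HI HS Hex.
  assert (HF : filter.ProperFilter F).
  { apply filter.Build_ProperFilter_ex; [exact Hex|]. split; [exact HT | exact HI | exact HS]. }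
  destruct (filter.ultraFilterLemma HF) as (U & HU & HFU).
  exists U; split; [|exact HFU].
  split.
  - exact (@filter.filterT _ U _).
  - intros A B; exact (@filter.filterI _ U _ A B).
  - intros A B; exact (@filter.filterS _ U _ A B).
  - intros A; exact (@filter.filter_ex _ U _ A).
  - intros A; exact (filter.in_ultra_setVsetC A HU).
Qed.

Lemma ultrafilter_along {T : Type} (e : nat -> T) (P : nat -> Prop) :
  (forall N, exists n, (N <= n)%nat /\ P n) ->
  exists U, is_ultrafilter U /\
    forall A, (exists N, forall n, (N <= n)%nat -> P n -> A (e n)) -> U A.
Proof.
  intros Hinf. apply ultrafilter_extension.
  - exists 0%nat; auto.
  - intros A B [N1 H1] [N2 H2]; exists (max N1 N2); intros n Hn HP.
    split; [apply H1 | apply H2]; auto; lia.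
  - intros A B HAB [N H]; exists N; auto.
  - intros A [N H]. destruct (Hinf N) as (n & Hn & HP); exists (e n); auto.
Qed.

Section Ultralimits.
Context {X : Type} (U : (X -> Prop) -> Prop).
Hypothesis HU : is_ultrafilter U.

Definition ulim (h : X -> R) (L : R) : Prop :=
  forall eps, 0 < eps -> U (fun x => Rabs (h x - L) <= eps).

Lemma ulim_unique (h : X -> R) (L L' : R) : ulim h L -> ulim h L' -> L = L'.
Proof.
  intros H1 H2. destruct (Req_dec L L') as [|Hne]; [assumption|]. exfalso.
  set (eps := Rabs (L - L') / 3).
  assert (Hpos : 0 < Rabs (L - L')) by (apply Rabs_pos_lt; lra).
  destruct (uf_nonempty _ HU _ (uf_and _ HU _ _ (H1 eps ltac:(unfold eps; lra))
                                                (H2 eps ltac:(unfold eps; lra)))) as [x [A B]].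
  assert (Rabs (L - L') <= Rabs (h x - L) + Rabs (h x - L')).
  { replace (L - L') with (- (h x - L) + (h x - L')) by ring.
    eapply Rle_trans; [apply Rabs_triang | rewrite Rabs_Ropp; lra]. }
  unfold eps in *; lra.
Qed.

(* Bounded real functions have a limit along U: the supremum of the r with
   {r < h} in U. *)
Lemma ulim_exists (h : X -> R) : (exists M, forall x, Rabs (h x) <= M) -> exists L, ulim h L.
Proof.
  intros [M HM].
  set (S := fun r => U (fun x => r < h x)).
  assert (HS1 : S (- M - 1)).
  { apply (uf_mono _ HU (fun _ => True)); [|apply HU].
    intros x _; pose proof (HM x); pose proof (Rle_abs (- h x)); rewrite Rabs_Ropp in *; lra. }
  assert (HS2 : bound S).
  { exists M; intros r Hr. destruct (uf_nonempty _ HU _ Hr) as [x Hx].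
    pose proof (HM x); pose proof (Rle_abs (h x)); lra. }
  destruct (completeness S HS2 (ex_intro _ _ HS1)) as [L [Hub Hleast]].
  exists L; intros eps Heps.
  assert (Hlow : U (fun x => L - eps < h x)).
  { apply NNPP; intro Hn. assert (L <= L - eps); [|lra].
    apply Hleast; intros r Hr. apply Rnot_lt_le; intro Hlt; apply Hn.
    apply (uf_mono _ HU (fun x => r < h x)); [intros x Hx; lra | exact Hr]. }
  assert (Hup : U (fun x => h x <= L + eps)).
  { destruct (uf_total _ HU (fun x => L + eps < h x)) as [Hu|Hu].
    - exfalso. assert (L + eps <= L) by (apply Hub; exact Hu). lra.
    - apply (uf_mono _ HU _ _ (fun x Hx => Rnot_lt_le _ _ Hx) Hu). }
  refine (uf_mono _ HU _ _ (fun x Hx => _) (uf_and _ HU _ _ Hlow Hup)).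
  destruct Hx; apply Rabs_le; lra.
Qed.

Lemma ulim_const (r : R) : ulim (fun _ => r) r.
Proof.
  intros eps Heps. apply (uf_mono _ HU (fun _ => True)); [|apply HU].
  intros; rewrite Rminus_diag, Rabs_R0; lra.
Qed.

Lemma ulim_ext (h1 h2 : X -> R) (L1 L2 : R) :
  (forall x, h1 x = h2 x) -> L1 = L2 -> ulim h1 L1 -> ulim h2 L2.
Proof.
  intros E <- H eps Heps. refine (uf_mono _ HU _ _ (fun x Hx => _) (H eps Heps)).
  rewrite <- E; exact Hx.
Qed.

Lemma ulim_lin (h1 h2 : X -> R) (L1 L2 p q : R) : ulim h1 L1 -> ulim h2 L2 ->
  ulim (fun x => p * h1 x + q * h2 x) (p * L1 + q * L2).
Proof.
  intros H1 H2 eps Heps.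
  set (d := eps / (Rabs p + Rabs q + 1)).
  pose proof (Rabs_pos p); pose proof (Rabs_pos q).
  assert (Hd : 0 < d) by (unfold d; apply Rdiv_lt_0_compat; lra).
  assert (Ed : d * (Rabs p + Rabs q + 1) = eps) by (unfold d; field; lra).
  refine (uf_mono _ HU _ _ (fun x Hx => _) (uf_and _ HU _ _ (H1 d Hd) (H2 d Hd))).
  destruct Hx as [A B].
  replace (p * h1 x + q * h2 x - (p * L1 + q * L2))
    with (p * (h1 x - L1) + q * (h2 x - L2)) by ring.
  eapply Rle_trans; [apply Rabs_triang|]. rewrite !Rabs_mult.
  pose proof (Rabs_pos (h1 x - L1)); pose proof (Rabs_pos (h2 x - L2)); nra.
Qed.

Lemma ulim_mul (h1 h2 : X -> R) (L1 L2 M : R) : (forall x, Rabs (h1 x) <= M) ->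
  ulim h1 L1 -> ulim h2 L2 -> ulim (fun x => h1 x * h2 x) (L1 * L2).
Proof.
  intros HM H1 H2 eps Heps.
  set (d := eps / (Rabs M + Rabs L2 + 1)).
  pose proof (Rabs_pos M); pose proof (Rabs_pos L2).
  assert (Hd : 0 < d) by (unfold d; apply Rdiv_lt_0_compat; lra).
  assert (Ed : d * (Rabs M + Rabs L2 + 1) = eps) by (unfold d; field; lra).
  refine (uf_mono _ HU _ _ (fun x Hx => _) (uf_and _ HU _ _ (H1 d Hd) (H2 d Hd))).
  destruct Hx as [A B].
  replace (h1 x * h2 x - L1 * L2) with (h1 x * (h2 x - L2) + L2 * (h1 x - L1)) by ring.
  eapply Rle_trans; [apply Rabs_triang|]. rewrite !Rabs_mult.
  pose proof (Rabs_pos (h1 x - L1)); pose proof (Rabs_pos (h2 x - L2)).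
  pose proof (HM x); pose proof (Rle_abs M); pose proof (Rabs_pos (h1 x)); nra.
Qed.


(* The limit along U of a bounded real function (0 for unbounded ones). *)
Definition ulimit (h : X -> R) : R := epsilon (inhabits 0) (ulim h).

Lemma ulimit_spec (h : X -> R) : (exists M, forall x, Rabs (h x) <= M) -> ulim h (ulimit h).
Proof. intros Hb; unfold ulimit; apply epsilon_spec, ulim_exists, Hb. Qed.

Lemma ulimit_eq (h : X -> R) (L : R) : ulim h L -> ulimit h = L.
Proof. intros H; apply (ulim_unique h); [unfold ulimit; apply epsilon_spec; eauto | exact H]. Qed.

Definition ultralimit (g : X -> Cx) : Cx :=
  (ulimit (fun x => fst (g x)), ulimit (fun x => snd (g x))).

Lemma ultralimit_eq (g : X -> Cx) (z : Cx) :
  ulim (fun x => fst (g x)) (fst z) -> ulim (fun x => snd (g x)) (snd z) -> ultralimit g = z.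
Proof.
  intros H1 H2; unfold ultralimit; rewrite (ulimit_eq _ _ H1), (ulimit_eq _ _ H2).
  destruct z; reflexivity.
Qed.

Lemma ultralimit_fst (g : X -> Cx) : Defs.bounded g ->
  ulim (fun x => fst (g x)) (fst (ultralimit g)).
Proof.
  intros [M HM]; apply ulimit_spec; exists M; intro x.
  eapply Rle_trans; [apply Cmod_fst | apply HM].
Qed.

Lemma ultralimit_snd (g : X -> Cx) : Defs.bounded g ->
  ulim (fun x => snd (g x)) (snd (ultralimit g)).
Proof.
  intros [M HM]; apply ulimit_spec; exists M; intro x.
  eapply Rle_trans; [apply Cmod_snd | apply HM].
Qed.

Lemma ultralimit_character (e : nat -> X) (b : X -> X -> R) (c : X -> R) :
  character e b c ultralimit.
Proof.
  split; [|split; [|split]].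
  - intros g h Hg Hh; apply (Aplus_bounded e b c) in Hg, Hh.
    pose proof (ultralimit_fst g Hg) as G1; pose proof (ultralimit_snd g Hg) as G2.
    pose proof (ultralimit_fst h Hh) as H1; pose proof (ultralimit_snd h Hh) as H2.
    apply ultralimit_eq; [eapply ulim_ext; [| |exact (ulim_lin _ _ _ _ 1 1 G1 H1)]
                         |eapply ulim_ext; [| |exact (ulim_lin _ _ _ _ 1 1 G2 H2)]];
      try intro; simpl; ring.
  - intros a g Hg; apply (Aplus_bounded e b c) in Hg.
    pose proof (ultralimit_fst g Hg) as G1; pose proof (ultralimit_snd g Hg) as G2.
    apply ultralimit_eq;
      [eapply ulim_ext; [| |exact (ulim_lin _ _ _ _ (fst a) (- snd a) G1 G2)]
      |eapply ulim_ext; [| |exact (ulim_lin _ _ _ _ (fst a) (snd a) G2 G1)]];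
      try intro; simpl; ring.
  - intros g h Hg Hh; apply (Aplus_bounded e b c) in Hg, Hh.
    pose proof (ultralimit_fst g Hg) as G1; pose proof (ultralimit_snd g Hg) as G2.
    pose proof (ultralimit_fst h Hh) as H1; pose proof (ultralimit_snd h Hh) as H2.
    destruct Hg as [M HM].
    assert (HM1 : forall x, Rabs (fst (g x)) <= M)
      by (intro x; eapply Rle_trans; [apply Cmod_fst | apply HM]).
    assert (HM2 : forall x, Rabs (snd (g x)) <= M)
      by (intro x; eapply Rle_trans; [apply Cmod_snd | apply HM]).
    pose proof (ulim_mul _ _ _ _ _ HM1 G1 H1) as P11.
    pose proof (ulim_mul _ _ _ _ _ HM2 G2 H2) as P22.
    pose proof (ulim_mul _ _ _ _ _ HM1 G1 H2) as P12.
    pose proof (ulim_mul _ _ _ _ _ HM2 G2 H1) as P21.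
    apply ultralimit_eq; [eapply ulim_ext; [| |exact (ulim_lin _ _ _ _ 1 (-1) P11 P22)]
                         |eapply ulim_ext; [| |exact (ulim_lin _ _ _ _ 1 1 P12 P21)]];
      try intro; simpl; ring.
  - exists (fun _ => Defs.C1); split; [apply Aplus_one|].
    rewrite (ultralimit_eq _ Defs.C1) by apply ulim_const.
    unfold Defs.C1, C0; intro E; injection E; lra.
Qed.

Lemma ultralimit_modulus_ge (g : X -> Cx) (r : R) :
  Defs.bounded g -> U (fun x => r < Cmod (g x)) -> r <= Cmod (ultralimit g).
Proof.
  intros Hb Hr. apply Rle_plus_epsilon; intros eps Heps.
  pose proof (ultralimit_fst g Hb (eps / 2) ltac:(lra)) as H1.
  pose proof (ultralimit_snd g Hb (eps / 2) ltac:(lra)) as H2.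
  destruct (uf_nonempty _ HU _ (uf_and _ HU _ _ Hr (uf_and _ HU _ _ H1 H2)))
    as (x & Hx & Hx1 & Hx2).
  pose proof (Cmod_le_sub (g x) (ultralimit g)) as T.
  pose proof (Cmod_le_coords (Csub (g x) (ultralimit g))) as T'.
  unfold Csub in T, T'; cbn [fst snd] in T'; lra.
Qed.

(* If U contains no singleton and the indicators of the points lie in A, then
   the ultralimit is not a point evaluation: it vanishes on the indicator of
   any point x0, whereas evaluation at x0 gives 1. *)
Lemma ultralimit_not_point_evaluation (e : nat -> X) (b : X -> X -> R) (c : X -> R) :
  (forall x0, U (fun x => x <> x0)) -> (forall x0, in_A e b c (indicator x0)) ->
  ~ point_evaluation e b c ultralimit.
Proof.
  intros Hfree HindA [x0 Hx0].
  pose proof (Hx0 _ (Aplus_of_A e b c _ (HindA x0))) as E.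
  assert (Hzero : forall x, x <> x0 -> indicator x0 x = C0)
    by (intros x Hx; unfold indicator; destruct (excluded_middle_informative _); easy).
  assert (Hlim : forall h : X -> R, (forall x, x <> x0 -> h x = 0) -> ulim h 0).
  { intros h Hh eps Heps. refine (uf_mono _ HU _ _ (fun x Hx => _) (Hfree x0)).
    rewrite (Hh x Hx), Rminus_diag, Rabs_R0; lra. }
  rewrite (ultralimit_eq _ C0) in E.
  - unfold indicator in E; destruct (excluded_middle_informative _) as [_|Hne]; [|now apply Hne].
    unfold C0, Defs.C1 in E; injection E; lra.
  - apply Hlim; intros x Hx; now rewrite Hzero.
  - apply Hlim; intros x Hx; now rewrite Hzero.
Qed.

End Ultralimits.

(* Boundary characters attain values of modulus arbitrarily close to sup |f|:
   take the ultralimit along an ultrafilter through the infinitely many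
   vertices where |f| is close to its supremum. *)
Lemma boundary_character_near_sup {X : Type} (e : nat -> X) (b : X -> X -> R) (c : X -> R)
  (f : X -> Cx) (m eps : R) :
  enumeration e -> weighted_graph e b c -> connected b -> (forall x, harmonic_at e b c f x) ->
  Defs.bounded f -> is_lub (fun r => exists x, r = Cmod (f x)) m -> 0 < eps ->
  exists gam, in_boundary e b c gam /\ m - eps <= Cmod (gam f).
Proof.
  intros He Hgraph Hconn Hharm Hbd Hm Heps.
  destruct (ultrafilter_along e (fun n => m - eps < Cmod (f (e n)))
              (fun N => harmonic_modulus_near_sup e b c f m He Hgraph Hconn Hharm Hm eps N Heps))
    as (U & HU & Htail).
  exists (ultralimit U); split; [split|].
  - apply ultralimit_character, HU.
  - apply ultralimit_not_point_evaluation; [exact HU | |intro x0; now apply indicator_in_A].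
    intro x0. destruct He as [Hinj Hsurj]; destruct (Hsurj x0) as [k <-].
    apply Htail; exists (S k); intros n Hn _ Heq. apply Hinj in Heq; lia.
  - apply ultralimit_modulus_ge; [exact HU | exact Hbd |].
    apply Htail; exists 0%nat; auto.
Qed.

Theorem mainTheorem12 (X : Type) (e : nat -> X) (He : enumeration e)
  (b : X -> X -> R) (c : X -> R)
  (Hgraph : weighted_graph e b c) (Hconn : connected b)
  (Hcc : canonically_compactifiable e b c)
  (f : X -> Cx) (HfA : in_A e b c f) (Hharm : forall x, harmonic_at e b c f x) :
  exists m : R,
    is_lub (fun r => exists x, r = Cmod (f x)) m /\
    is_lub (fun r => exists gam, in_boundary e b c gam /\ r = Cmod (gam f)) m.
Proof.
  assert (Hbd : Defs.bounded f) by apply HfA.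
  destruct (completeness (fun r => exists x, r = Cmod (f x))) as [m Hm].
  { destruct Hbd as [M HM]; exists M; intros r [x ->]; apply HM. }
  { exists (Cmod (f (e 0%nat))); eauto. }
  exists m; split; [exact Hm | split].
  -
    intros r (gam & [Hchar _] & ->).
    apply (character_bound e b c gam Hchar f m (Aplus_of_A e b c f HfA)).
    intro x; apply Hm; eauto.
  -
    intros u Hu; apply Rle_plus_epsilon; intros eps Heps.
    destruct (boundary_character_near_sup e b c f m eps He Hgraph Hconn Hharm Hbd Hm Heps)
      as (gam & Hgam & Hnear).
    assert (Cmod (gam f) <= u) by (apply Hu; eauto).
    lra.
Qed.
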